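(* Let $p,q\in[0,1]$ be real numbers with $p<q$, let $I$ be a closed interval with $I\subseteq(0,1)$, let $\mathscr S$ be a countable set of selection processes with $\mathscr S\supseteq\mathscr S^{p,q}_{\mathscr F_{\mathrm{ML}}}$, and let $\varpi\in\Omega$ be $\mathscr S$-random for $I$. Then for every $R\in\{\mathrm{ML},\mathrm{wML},\mathrm C,\mathrm S\}$, a path $\omega\in\Omega$ is $R$-random for $\varphi^\varpi_{p,q}$ if and only if it is $R$-random for $[p,q]$.
   Context: Notation: $\mathbb N=\{1,2,\dots\}$, $\mathbb N_0=\mathbb N\cup\{0\}$. $\Omega=\{0,1\}^{\mathbb N}$ is the set of paths $\omega=(\omega_1,\omega_2,\dots)$; $\omega_{1:n}=(\omega_1,\dots,\omega_n)$, $\omega_{1:0}=\square$. $\mathbb S=\bigcup_{n\in\mathbb N_0}\{0,1\}^n$ is the set of situations, $|s|$ the length, $sx$ concatenation. For $r\in[0,1]$, $f:\{0,1\}\to\mathbb R$: $E_r(f)=rf(1)+(1-r)f(0)$; for a closed interval $I\subseteq[0,1]$, $\overline E_I(f)=\max_{r\in I}E_r(f)$. A forecasting system is a map $\varphi$ from $\mathbb S$ to closed subintervals of $[0,1]$, $\underline\varphi(s)=\min\varphi(s)$, $\overline\varphi(s)=\max\varphi(s)$; being random for an interval $I$ means being random for the constant forecasting system with value $I$. A real process is $F:\mathbb S\to\mathbb R$; $\Delta F(s)$ is $x\mapsto F(sx)-F(s)$. $M$ is a supermartingale for $\varphi$ if $\overline E_{\varphi(s)}(\Delta M(s))\le0$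 for all $s$. A test process is a non-negative real process with $F(\square)=1$; a test supermartingale for $\varphi$ is a test process that is a supermartingale for $\varphi$. A multiplier process $D$ assigns to each $s$ a function $D(s):\{0,1\}\to[0,\infty)$ and generates the test process $F(\square)=1$, $F(sx)=F(s)D(s)(x)$. Computability: maps from countable effectively encoded domains to $\mathbb N_0$ or $\mathbb Q$ are recursive if Turing-computable; a real map $r$ on a domain $\mathscr D$ is lower semicomputable if $r(d)=\lim_nq(d,n)$ for a recursive rational $q$ non-decreasing in $n$, computable if $|r(d)-q(d,n)|<2^{-n}$ for a recursive rational $q$. $\mathscr F_{\mathrm{ML}}$: lower semicomputable test processes; $\mathscr F_{\mathrm{wML}}$: test processes generated by lower semicomputable multiplier processes; $\mathscr F_{\mathrm C}=\mathscr F_{\mathrm S}$: positive rational-valued recursive test processes. $\overline{\mathbb T}_R(\varphi)$: elements of $\mathscr F_R$ that are test supermartingales for $\varphi$. For $R\in\{\mathrm{ML},\mathrm{wML},\mathrm C\}$, $\omega$ is $R$-random for $\varphi$ if no $T\in\overline{\mathbb T}_R(\varphi)$ has $\limsup_nT(\omega_{1:n})=\infty$. A real growth function is a computable, non-decreasing, unbounded $\tau:\mathbb N_0\to[0,\infty)$; $\omega$ is S-random for $\varphi$ if there are no $T\in\overline{\mathbb T}_{\mathrm S}(\varphi)$ and real growth function $\tau$ with $\limsup_n[T(\omega_{1:n})-\tau(n)]\ge0$. Selection: a selection process is $S:\mathbb S\to\{0,1\}$, temporal if $S(s)$ depends only on $|s|$ (written $S(n)$). For countable $\mathscr S$, $\omega$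 is $\mathscr S$-random for $\varphi$ if for every $S\in\mathscr S$ with $\lim_n\sum_{k=0}^{n-1}S(\omega_{1:k})=\infty$: $\liminf_n\frac{\sum_{k=0}^{n-1}S(\omega_{1:k})[\omega_{k+1}-\underline\varphi(\omega_{1:k})]}{\sum_{k=0}^{n-1}S(\omega_{1:k})}\ge0$ and $\limsup_n\frac{\sum_{k=0}^{n-1}S(\omega_{1:k})[\omega_{k+1}-\overline\varphi(\omega_{1:k})]}{\sum_{k=0}^{n-1}S(\omega_{1:k})}\le0$. For a real process $F$ and $r\in[0,1]$, $S^r_F$ is the temporal selection process with $S^r_F(n)=1$ if $E_r(\Delta F(s))>0$ for some $s$ with $|s|=n$, and $0$ otherwise; $\mathscr S^{p,q}_{\mathscr F}=\{S^r_F:F\in\mathscr F,\ r\in\{p,q\}\}$. For $\varpi\in\Omega$, $\varphi^\varpi_{p,q}$ is the precise forecasting system with $\varphi^\varpi_{p,q}(s)=p$ if $\varpi_{|s|+1}=0$ and $=q$ if $\varpi_{|s|+1}=1$. *)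

From Stdlib Require Import Reals Lra Lia List Arith.
Open Scope R_scope.

(* A path omega = (omega_1, omega_2, ...) is  w : nat -> bool  with
   omega_{k+1} = w k.  A situation is a finite list of bits (s_1,...,s_n);
   concatenation sx is  s ++ [x].                                        *)
Definition path := nat -> bool.
Definition sit := list bool.

Definition prefix (w : path) (n : nat) : sit := map w (seq 0 n).

Definition b2R (b : bool) : R := if b then 1 else 0.

(* A forecasting system maps a situation to the closed interval
   [fst (phi s), snd (phi s)]. *)
Definition fsys := sit -> R * R.

Definition const_fsys (a b : R) : fsys := fun _ => (a, b).

Definition phi_pq (varpi : path) (p q : R) : fsys :=
  fun s => if varpi (length s) then (q, q) else (p, p).

Definition in_fs (phi : fsys) (s : sit) (r : R) : Prop :=
  fst (phi s) <= r <= snd (phi s).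

Definition Er (r : R) (f : bool -> R) : R := r * f true + (1 - r) * f false.

Definition rproc := sit -> R.

Definition DeltaF (F : rproc) (s : sit) : bool -> R :=
  fun x => F (s ++ x :: nil) - F s.

(* upper expectation  max_{r in phi s} E_r(Delta M(s)) <= 0 *)
Definition supermart (phi : fsys) (M : rproc) : Prop :=
  forall s r, in_fs phi s r -> Er r (DeltaF M s) <= 0.

Definition test_proc (F : rproc) : Prop :=
  (forall s, 0 <= F s) /\ F nil = 1.

Definition mproc := sit -> bool -> R.

Fixpoint gen_aux (D : mproc) (s : sit) (n : nat) : R :=
  match n with
  | O => 1
  | S k => gen_aux D s k * D (firstn k s) (nth k s false)
  end.
(* F(square) = 1, F(sx) = F(s) D(s)(x) *)
Definition gen (D : mproc) : rproc := fun s => gen_aux D s (length s).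

(* Computability: mu-recursive (= Turing computable) partial functions *)
Inductive code : Type :=
| CZero : code
| CSucc : code
| CProj : nat -> code
| CComp : code -> list code -> code
| CPrec : code -> code -> code
| CMu   : code -> code.

Inductive eval : code -> list nat -> nat -> Prop :=
| eZero xs : eval CZero xs 0
| eSucc x xs : eval CSucc (x :: xs) (S x)
| eProj i xs v : nth_error xs i = Some v -> eval (CProj i) xs v
| eComp f gs xs ys v : evals gs xs ys -> eval f ys v -> eval (CComp f gs) xs v
| ePrec0 f g xs v : eval f xs v -> eval (CPrec f g) (0%nat :: xs) v
| ePrecS f g n xs u v :
    eval (CPrec f g) (n :: xs) u -> eval g (n :: u :: xs) v ->
    eval (CPrec f g) (S n :: xs) v
| eMu f xs n :
    eval f (n :: xs) 0 ->
    (forall m, (m < n)%nat -> exists k, eval f (m :: xs) (S k)) ->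
    eval (CMu f) xs n
with evals : list code -> list nat -> list nat -> Prop :=
| esNil xs : evals nil xs nil
| esCons g gs xs y ys : eval g xs y -> evals gs xs ys -> evals (g :: gs) xs (y :: ys).

(* effective encoding of situations as natural numbers (binary with a
   leading 1): a bijection between sit and positive naturals *)
Definition enc (s : sit) : nat :=
  fold_left (fun (acc : nat) (b : bool) => (2 * acc + (if b then 1 else 0))%nat) s 1%nat.

(* rational outputs: a triple of codes computing sign bit, numerator and
   denominator-minus-one; the rational value is (+/-) num / (den+1) *)
Definition qcode := (code * code * code)%type.

Definition qval (c : qcode) (args : list nat) (v : R) : Prop :=
  let cs := fst (fst c) in let cn := snd (fst c) in let cd := snd c in
  exists sg nm dn, eval cs args sg /\ eval cn args nm /\ eval cd args dn /\
    v = (if Nat.eqb sg 0 then 1 else -1) * INR nm / INR (S dn).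

Definition lsc {D : Type} (args : D -> nat -> list nat) (r : D -> R) : Prop :=
  exists (c : qcode) (q : D -> nat -> R),
    (forall d n, qval c (args d n) (q d n)) /\
    (forall d n, q d n <= q d (S n)) /\
    (forall d, Un_cv (q d) (r d)).

Definition computable_real {D : Type} (args : D -> nat -> list nat) (r : D -> R) : Prop :=
  exists (c : qcode) (q : D -> nat -> R),
    (forall d n, qval c (args d n) (q d n)) /\
    (forall d n, Rabs (r d - q d n) < / 2 ^ n).

Definition F_ML (F : rproc) : Prop :=
  test_proc F /\ lsc (fun s n => enc s :: n :: nil) F.

Definition F_wML (F : rproc) : Prop :=
  test_proc F /\
  exists D : mproc,
    (forall s x, 0 <= D s x) /\
    lsc (fun (sx : sit * bool) n =>
           enc (fst sx) :: (if snd sx then 1 else 0)%nat :: n :: nil)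
        (fun sx => D (fst sx) (snd sx)) /\
    (forall s, F s = gen D s).

(* F_C = F_S: positive rational-valued recursive test processes *)
Definition F_C (F : rproc) : Prop :=
  test_proc F /\ (forall s, 0 < F s) /\
  exists c : qcode, forall s, qval c (enc s :: nil) (F s).

Definition test_supermart (phi : fsys) (F : rproc) : Prop :=
  test_proc F /\ supermart phi F.

Definition limsup_inf (a : nat -> R) : Prop :=
  forall M N, exists n, (N <= n)%nat /\ a n > M.

Definition limsup_ge0 (a : nat -> R) : Prop :=
  forall eps N, eps > 0 -> exists n, (N <= n)%nat /\ a n > - eps.

Definition growth (tau : nat -> R) : Prop :=
  (forall n, 0 <= tau n) /\
  computable_real (fun n m => n :: m :: nil) tau /\
  (forall n, tau n <= tau (S n)) /\
  (forall M, exists n, tau n > M).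

Inductive rnotion := RML | RwML | RC | RS.

Definition ML_like_random (cls : rproc -> Prop) (phi : fsys) (w : path) : Prop :=
  ~ exists T, cls T /\ test_supermart phi T /\ limsup_inf (fun n => T (prefix w n)).

Definition random (Rn : rnotion) (phi : fsys) (w : path) : Prop :=
  match Rn with
  | RML => ML_like_random F_ML phi w
  | RwML => ML_like_random F_wML phi w
  | RC => ML_like_random F_C phi w
  | RS => ~ exists T tau, F_C T /\ test_supermart phi T /\ growth tau /\
            limsup_ge0 (fun n => T (prefix w n) - tau n)
  end.

Definition selproc := sit -> bool.

Fixpoint selcount (sel : selproc) (w : path) (n : nat) : R :=
  match n with
  | O => 0
  | S k => selcount sel w k + (if sel (prefix w k) then 1 else 0)
  end.

Fixpoint selsum (sel : selproc) (f : sit -> R) (w : path) (n : nat) : R :=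
  match n with
  | O => 0
  | S k => selsum sel f w k +
           (if sel (prefix w k) then b2R (w k) - f (prefix w k) else 0)
  end.

Definition countable_set {A : Type} (P : A -> Prop) : Prop :=
  exists f : A -> nat, forall x y, P x -> P y -> f x = f y -> x = y.

Definition sel_random (Ss : selproc -> Prop) (phi : fsys) (w : path) : Prop :=
  forall sel, Ss sel ->
    (forall M, exists N, forall n, (N <= n)%nat -> selcount sel w n > M) ->
    (forall eps, eps > 0 -> exists N, forall n, (N <= n)%nat ->
        selsum sel (fun s => fst (phi s)) w n / selcount sel w n > - eps) /\
    (forall eps, eps > 0 -> exists N, forall n, (N <= n)%nat ->
        selsum sel (fun s => snd (phi s)) w n / selcount sel w n < eps).

Definition is_SrF (r : R) (F : rproc) (sel : selproc) : Prop :=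
  forall s, sel s = true <->
    exists s', length s' = length s /\ Er r (DeltaF F s') > 0.

Definition contains_SpqML (p q : R) (Ss : selproc -> Prop) : Prop :=
  forall F r sel, F_ML F -> (r = p \/ r = q) -> is_SrF r F sel -> Ss sel.

(* Every supermartingale for [p, q] is one for the precise forecasts of φ^ϖ, so randomness
   for φ^ϖ implies randomness for [p, q]. Conversely, let T be a test supermartingale for
   φ^ϖ. If E_p(ΔT(s)) > 0 for some s of length n, the forecast at time n is not p, so
   ϖ_(n+1) = 1: the temporal selection S^p_T only selects ones of ϖ, and likewise S^q_T only
   zeros. As ϖ is S-random for I ⊆ (0, 1), both select finitely often, so from some time N
   on T is a supermartingale for p and q, hence for all of [p, q]. The process equal to 1 up
   to time N and to T / (k + 1) afterwards, with k + 1 bounding T at time N + 1, is then a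
   test supermartingale for [p, q] in the same class, and a fixed positive multiple of T
   from time N + 1 on, so it still succeeds on ω (for S-randomness, against the growth
   function scaled by the same factor). The selection argument needs T lower
   semicomputable; weakly ML and computable tests are, the former because products of
   lower semicomputable multipliers are. *)

From Stdlib Require Import Reals Lra Lia List Arith ClassicalEpsilon FunctionalExtensionality.
Import ListNotations.
Open Scope R_scope.

(** * Primitive recursive codes *)

Ltac eval_proj := apply eProj; reflexivity.

Lemma eval_comp1 f g xs y v :
  eval g xs y -> eval f [y] v -> eval (CComp f [g]) xs v.
Proof. intros; econstructor; [repeat econstructor; eauto | eauto]. Qed.

Lemma eval_comp2 f g1 g2 xs y1 y2 v :
  eval g1 xs y1 -> eval g2 xs y2 -> eval f [y1; y2] v ->
  eval (CComp f [g1; g2]) xs v.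
Proof. intros; econstructor; [repeat econstructor; eauto | eauto]. Qed.

Lemma eval_comp3 f g1 g2 g3 xs y1 y2 y3 v :
  eval g1 xs y1 -> eval g2 xs y2 -> eval g3 xs y3 -> eval f [y1; y2; y3] v ->
  eval (CComp f [g1; g2; g3]) xs v.
Proof. intros; econstructor; [repeat econstructor; eauto | eauto]. Qed.

Fixpoint c_const (k : nat) : code :=
  match k with O => CZero | S k => CComp CSucc [c_const k] end.

Lemma eval_const k xs : eval (c_const k) xs k.
Proof. induction k; [constructor | eapply eval_comp1; eauto; constructor]. Qed.

Fixpoint primrec (a : nat) (h : nat -> nat -> nat) (n : nat) : nat :=
  match n with O => a | S m => h m (primrec a h m) end.

Lemma eval_prec f g xs a h :
  eval f xs a -> (forall n u, eval g (n :: u :: xs) (h n u)) ->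
  forall n, eval (CPrec f g) (n :: xs) (primrec a h n).
Proof. intros Hf Hg n; induction n; econstructor; eauto. Qed.

Definition c_add : code := CPrec (CProj 0) (CComp CSucc [CProj 1]).

Lemma eval_add x y xs : eval c_add (x :: y :: xs) (x + y)%nat.
Proof.
  replace (x + y)%nat with (primrec y (fun _ u => S u) x)
    by (induction x; simpl; auto).
  apply eval_prec; [eval_proj |].
  intros; eapply eval_comp1; [eval_proj | constructor].
Qed.

Definition c_mul : code := CPrec CZero (CComp c_add [CProj 2; CProj 1]).

Lemma eval_mul x y xs : eval c_mul (x :: y :: xs) (x * y)%nat.
Proof.
  replace (x * y)%nat with (primrec 0 (fun _ u => y + u)%nat x)
    by (induction x; simpl; auto).
  apply eval_prec; [constructor |].
  intros; eapply eval_comp2; [eval_proj | eval_proj | apply eval_add].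
Qed.

Definition c_pred : code := CPrec CZero (CProj 0).

Lemma eval_pred x xs : eval c_pred (x :: xs) (Nat.pred x).
Proof.
  replace (Nat.pred x) with (primrec 0 (fun n _ => n) x) by (destruct x; auto).
  apply eval_prec; [constructor | intros; eval_proj].
Qed.

(* [c_sub] swaps its arguments so that the recursion runs on the subtrahend. *)
Definition c_sub : code :=
  CComp (CPrec (CProj 0) (CComp c_pred [CProj 1])) [CProj 1; CProj 0].

Lemma eval_sub x y xs : eval c_sub (x :: y :: xs) (x - y)%nat.
Proof.
  eapply eval_comp2; [eval_proj | eval_proj |].
  replace (x - y)%nat with (primrec x (fun _ u => Nat.pred u) y)
    by (induction y; simpl; lia).
  apply eval_prec; [eval_proj |].
  intros; eapply eval_comp1; [eval_proj | apply eval_pred].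
Qed.

Lemma succ_div_mod2 x : (S x / 2 = x / 2 + x mod 2 /\ S x mod 2 = 1 - x mod 2)%nat.
Proof.
  pose proof (Nat.div_mod_eq x 2); pose proof (Nat.mod_upper_bound x 2).
  pose proof (Nat.div_mod_eq (S x) 2); pose proof (Nat.mod_upper_bound (S x) 2).
  lia.
Qed.

Definition c_mod2 : code := CPrec CZero (CComp c_sub [c_const 1; CProj 1]).

Lemma eval_mod2 x xs : eval c_mod2 (x :: xs) (x mod 2)%nat.
Proof.
  replace (x mod 2)%nat with (primrec 0 (fun _ u => 1 - u)%nat x).
  - apply eval_prec; [constructor |].
    intros; eapply eval_comp2; [apply eval_const | eval_proj | apply eval_sub].
  - induction x as [|x IH]; [reflexivity |].
    cbn [primrec]. rewrite IH. symmetry. apply succ_div_mod2.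
Qed.

Definition c_div2 : code :=
  CPrec CZero (CComp c_add [CProj 1; CComp c_mod2 [CProj 0]]).

Lemma eval_div2 x xs : eval c_div2 (x :: xs) (x / 2)%nat.
Proof.
  replace (x / 2)%nat with (primrec 0 (fun n u => u + n mod 2)%nat x).
  - apply eval_prec; [constructor |].
    intros; eapply eval_comp2; [eval_proj | | apply eval_add].
    eapply eval_comp1; [eval_proj | apply eval_mod2].
  - induction x as [|x IH]; [reflexivity |].
    cbn [primrec]. rewrite IH. symmetry. apply succ_div_mod2.
Qed.

Definition c_shiftr : code := CPrec (CProj 0) (CComp c_div2 [CProj 1]).

Lemma eval_shiftr i e xs : eval c_shiftr (i :: e :: xs) (e / 2 ^ i)%nat.
Proof.
  replace (e / 2 ^ i)%nat with (primrec e (fun _ u => u / 2)%nat i).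
  - apply eval_prec; [eval_proj |].
    intros; eapply eval_comp1; [eval_proj | apply eval_div2].
  - induction i as [|i IH]; cbn [primrec].
    + now rewrite Nat.pow_0_r, Nat.div_1_r.
    + now rewrite IH, Nat.Div0.div_div, Nat.pow_succ_r', Nat.mul_comm.
Qed.

Lemma evals_projs ys xs :
  evals (map CProj (seq (length xs) (length ys))) (xs ++ ys) ys.
Proof.
  revert xs; induction ys as [|y ys IH]; intros xs; constructor.
  - apply eProj. rewrite nth_error_app2, Nat.sub_diag by lia. reflexivity.
  - specialize (IH (xs ++ [y])).
    rewrite <- app_assoc, length_app, Nat.add_1_r in IH. exact IH.
Qed.

(* [c_ite m t f g], on [m] arguments, runs [f] if [t] returns 0 and [g] otherwise: the
   value of [t] is the counter of a recursion whose step ignores the previous value. *)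
Definition c_ite (m : nat) (t f g : code) : code :=
  CComp (CPrec f (CComp g (map CProj (seq 2 m)))) (t :: map CProj (seq 0 m)).

Lemma eval_ite_true t f g xs v :
  eval t xs 0 -> eval f xs v -> eval (c_ite (length xs) t f g) xs v.
Proof.
  intros. econstructor; [constructor; [eauto | apply (evals_projs xs [])] |].
  constructor; auto.
Qed.

Lemma eval_ite_false t f g xs k u v :
  eval t xs (S k) -> eval f xs u -> eval g xs v -> eval (c_ite (length xs) t f g) xs v.
Proof.
  intros Ht Hf Hg.
  econstructor; [constructor; [eauto | apply (evals_projs xs [])] |].
  assert (Hstep : forall n w, eval (CComp g (map CProj (seq 2 (length xs)))) (n :: w :: xs) v)
    by (intros; econstructor; [apply (evals_projs xs [n; w]) | auto]).
  assert (Hrec : forall j, exists w,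
    eval (CPrec f (CComp g (map CProj (seq 2 (length xs))))) (j :: xs) w).
  { induction j as [|j [w Hw]]; eexists; [constructor | econstructor]; eauto. }
  destruct (Hrec k) as [w Hw]. econstructor; eauto.
Qed.

Definition bitn (b : bool) : nat := if b then 1%nat else 0%nat.

Lemma enc_snoc s b : enc (s ++ [b]) = (2 * enc s + bitn b)%nat.
Proof. unfold enc. rewrite fold_left_app. reflexivity. Qed.

Lemma enc_bounds s : (2 ^ length s <= enc s < 2 ^ S (length s))%nat.
Proof.
  induction s as [|b s IH] using rev_ind; [cbn; lia |].
  rewrite enc_snoc, length_app, Nat.add_1_r, !Nat.pow_succ_r'.
  rewrite Nat.pow_succ_r' in IH. destruct b; simpl bitn; lia.
Qed.

Lemma enc_app_div s t : (enc (s ++ t) / 2 ^ length t)%nat = enc s.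
Proof.
  induction t as [|b t IH] using rev_ind.
  - now rewrite app_nil_r, Nat.div_1_r.
  - rewrite app_assoc, enc_snoc, length_app, Nat.add_1_r, Nat.pow_succ_r'.
    rewrite <- Nat.Div0.div_div, <- IH. f_equal.
    rewrite Nat.mul_comm, Nat.div_add_l by lia. destruct b; simpl; lia.
Qed.

Lemma enc_firstn s m : (m <= length s)%nat ->
  (enc s / 2 ^ (length s - m))%nat = enc (firstn m s).
Proof.
  intros Hm. rewrite <- (firstn_skipn m s) at 1.
  replace (length s - m)%nat with (length (skipn m s)) by (rewrite length_skipn; lia).
  apply enc_app_div.
Qed.

Lemma firstn_S_snoc (s : sit) m : (m < length s)%nat ->
  firstn (S m) s = firstn m s ++ [nth m s false].
Proof.
  revert m; induction s as [|x s IH]; intros m Hm; simpl in Hm; [lia |].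
  destruct m; [reflexivity |]. rewrite !firstn_cons, IH by lia. reflexivity.
Qed.

Lemma enc_firstn_parity s m : (m < length s)%nat ->
  (enc (firstn (S m) s) mod 2)%nat = bitn (nth m s false).
Proof.
  intros Hm. rewrite firstn_S_snoc, enc_snoc, Nat.add_comm, Nat.mul_comm, Nat.Div0.mod_add
    by assumption.
  destruct (nth m s false); reflexivity.
Qed.

Definition c_shorter (N : nat) : code := CComp c_sub [c_const (2 ^ N); CProj 0].

Lemma eval_shorter N s xs : eval (c_shorter N) (enc s :: xs) (2 ^ N - enc s)%nat.
Proof. eapply eval_comp2; [apply eval_const | eval_proj | apply eval_sub]. Qed.

Lemma shorter_lt N s : (length s < N)%nat -> exists j, (2 ^ N - enc s)%nat = S j.
Proof.
  intros Hs. pose proof (enc_bounds s).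
  pose proof (Nat.pow_le_mono_r 2 (S (length s)) N ltac:(lia) Hs).
  exists (2 ^ N - enc s - 1)%nat. lia.
Qed.

Lemma shorter_ge N s : (N <= length s)%nat -> (2 ^ N - enc s)%nat = 0%nat.
Proof.
  intros Hs. pose proof (enc_bounds s).
  pose proof (Nat.pow_le_mono_r 2 N (length s) ltac:(lia) Hs). lia.
Qed.

Definition qscale (k : nat) (c : qcode) : qcode :=
  (fst (fst c), snd (fst c),
   CComp c_add [CComp c_mul [c_const k; CComp CSucc [snd c]]; snd c]).

Lemma qval_scale k c xs v : qval c xs v -> qval (qscale k c) xs (/ INR (S k) * v).
Proof.
  intros (sg & nm & dn & Hsg & Hnm & Hdn & ->).
  exists sg, nm, (k * S dn + dn)%nat; cbn [qscale fst snd].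
  split; [| split; [| split]]; auto.
  - eapply eval_comp2; [| exact Hdn | apply eval_add].
    eapply eval_comp2; [apply eval_const | | apply eval_mul].
    eapply eval_comp1; [exact Hdn | constructor].
  - replace (S (k * S dn + dn)) with (S k * S dn)%nat by lia.
    rewrite mult_INR. field. split; apply not_0_INR; lia.
Qed.

Definition qone : qcode := (CZero, c_const 1, CZero).

Lemma qval_one xs : qval qone xs 1.
Proof.
  exists 0%nat, 1%nat, 0%nat.
  split; [constructor | split; [apply eval_const | split; [constructor |]]].
  simpl. field.
Qed.

Definition qfirst (c : qcode) : qcode :=
  (CComp (fst (fst c)) [CProj 0], CComp (snd (fst c)) [CProj 0],
   CComp (snd c) [CProj 0]).

Lemma qval_first c x xs v : qval c [x] v -> qval (qfirst c) (x :: xs) v.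
Proof.
  intros (sg & nm & dn & Hsg & Hnm & Hdn & Hv). exists sg, nm, dn.
  repeat split; auto; (eapply eval_comp1; [eval_proj |]; assumption).
Qed.

Definition qif_shorter (N m : nat) (c1 c2 : qcode) : qcode :=
  (c_ite m (c_shorter N) (fst (fst c2)) (fst (fst c1)),
   c_ite m (c_shorter N) (snd (fst c2)) (snd (fst c1)),
   c_ite m (c_shorter N) (snd c2) (snd c1)).

Lemma qval_if_shorter N c1 c2 s xs v1 v2 :
  qval c1 (enc s :: xs) v1 -> qval c2 (enc s :: xs) v2 ->
  qval (qif_shorter N (length (enc s :: xs)) c1 c2) (enc s :: xs)
    (if (length s <? N)%nat then v1 else v2).
Proof.
  intros (sg1 & nm1 & dn1 & Hsg1 & Hnm1 & Hdn1 & Hv1)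
    (sg2 & nm2 & dn2 & Hsg2 & Hnm2 & Hdn2 & Hv2).
  pose proof (eval_shorter N s xs) as Ht.
  destruct (Nat.ltb_spec (length s) N) as [Hs | Hs].
  - destruct (shorter_lt N s Hs) as [j Hj]. rewrite Hj in Ht.
    exists sg1, nm1, dn1. repeat split; auto; eapply eval_ite_false; eauto.
  - rewrite (shorter_ge N s Hs) in Ht.
    exists sg2, nm2, dn2. repeat split; auto; apply eval_ite_true; auto.
Qed.

Fixpoint prodn (f : nat -> nat) (m : nat) : nat :=
  match m with O => 1%nat | S m => (prodn f m * f m)%nat end.

Lemma prodn_ext f g m : (forall j, (j < m)%nat -> f j = g j) -> prodn f m = prodn g m.
Proof. induction m; intros H; simpl; [| rewrite IHm, H]; auto. Qed.

Lemma prodn_rev f L : prodn (fun j => f (L - S j)%nat) L = prodn f L.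
Proof.
  induction L as [|L IH]; [reflexivity |].
  assert (Hshift : forall g m, prodn g (S m) = (g 0%nat * prodn (fun j => g (S j)) m)%nat).
  { intros g m; induction m as [|m IHm]; [simpl; lia |].
    transitivity (prodn g (S m) * g (S m))%nat; [reflexivity |].
    rewrite IHm. cbn [prodn]. ring. }
  rewrite Hshift, (prodn_ext _ (fun j => f (L - S j)%nat)) by (intros; f_equal; lia).
  rewrite IH. cbn [prodn]. replace (S L - 1)%nat with L by lia. ring.
Qed.

Lemma prodn_reversed_padded a L e : (L <= e)%nat ->
  prodn (fun j => if (j <? L)%nat then a (L - S j)%nat else 1%nat) e = prodn a L.
Proof.
  induction 1 as [|e He IH]; simpl.
  - rewrite <- (prodn_rev a). apply prodn_ext. intros j Hj.
    now rewrite (proj2 (Nat.ltb_lt j L) Hj).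
  - rewrite IH, (proj2 (Nat.ltb_ge e L)) by lia. lia.
Qed.

Definition c_shiftr_succ : code := CComp c_shiftr [CComp CSucc [CProj 0]; CProj 1].

Lemma eval_shiftr_succ j e xs : eval c_shiftr_succ (j :: e :: xs) (e / 2 ^ S j)%nat.
Proof.
  eapply eval_comp2; [| eval_proj | apply eval_shiftr].
  eapply eval_comp1; [eval_proj | constructor].
Qed.

(* The prefix of length [length s - 1 - j] is encoded by [enc s / 2 ^ (j + 1)], which is 0
   once [j >= length s], and the bit following it is the parity of [enc s / 2 ^ j]. *)
Definition c_prefix_factor (Fc : code) : code :=
  c_ite 3 c_shiftr_succ (c_const 1)
    (CComp Fc [c_shiftr_succ; CComp c_mod2 [CComp c_shiftr [CProj 0; CProj 1]]; CProj 2]).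

(* The loop runs over all [j < enc s]: this bounds [length s], and surplus factors are 1. *)
Definition c_prefix_prod (Fc : code) : code :=
  CComp (CPrec (c_const 1)
           (CComp c_mul [CProj 1; CComp (c_prefix_factor Fc) [CProj 0; CProj 2; CProj 3]]))
    [CProj 0; CProj 0; CProj 1].

Section PrefixProduct.

Variables (Fc : code) (s : sit) (n : nat) (a : nat -> nat).
Hypothesis Ha : forall k, (k < length s)%nat ->
  eval Fc [enc (firstn k s); bitn (nth k s false); n] (a k).

Lemma eval_prefix_factor j :
  eval (c_prefix_factor Fc) [j; enc s; n]
    (if (j <? length s)%nat then a (length s - S j)%nat else 1%nat).
Proof.
  set (L := length s). pose proof (enc_bounds s) as Hb. fold L in Hb.
  destruct (Nat.ltb_spec j L) as [Hj | Hj].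
  - assert (Hpre : (enc s / 2 ^ S j)%nat = enc (firstn (L - S j) s)).
    { rewrite <- enc_firstn by lia. f_equal. f_equal. lia. }
    assert (Hbit : (enc s / 2 ^ j)%nat = enc (firstn (S (L - S j)) s)).
    { rewrite <- enc_firstn by lia. f_equal. f_equal. lia. }
    pose proof (enc_bounds (firstn (L - S j) s)).
    pose proof (Nat.pow_nonzero 2 (length (firstn (L - S j) s)) ltac:(lia)).
    eapply (eval_ite_false _ _ _ [j; enc s; n] (enc s / 2 ^ S j - 1)%nat).
    + replace (S (enc s / 2 ^ S j - 1)) with (enc s / 2 ^ S j)%nat by lia.
      apply eval_shiftr_succ.
    + apply eval_const.
    + eapply eval_comp3; [apply eval_shiftr_succ | | eval_proj |].
      * eapply eval_comp1; [| apply eval_mod2].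
        eapply eval_comp2; [eval_proj | eval_proj | apply eval_shiftr].
      * rewrite Hpre, Hbit, enc_firstn_parity by lia. apply Ha. lia.
  - apply (eval_ite_true _ _ _ [j; enc s; n]); [| apply eval_const].
    replace 0%nat with (enc s / 2 ^ S j)%nat; [apply eval_shiftr_succ |].
    apply Nat.div_small, (Nat.lt_le_trans _ _ _ (proj2 Hb)), Nat.pow_le_mono_r; lia.
Qed.

Lemma eval_prefix_prod : eval (c_prefix_prod Fc) [enc s; n] (prodn a (length s)).
Proof.
  eapply eval_comp3; [eval_proj | eval_proj | eval_proj |].
  rewrite <- (prodn_reversed_padded a (length s) (enc s)).
  - set (fac := fun j => if (j <? length s)%nat then a (length s - S j) else 1%nat).
    replace (prodn fac (enc s)) with (primrec 1 (fun j u => u * fac j)%nat (enc s))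
      by (induction (enc s); simpl; auto).
    apply eval_prec; [apply eval_const |].
    intros. eapply eval_comp2; [eval_proj | | apply eval_mul].
    eapply eval_comp3; [eval_proj | eval_proj | eval_proj | apply eval_prefix_factor].
  - pose proof (enc_bounds s). pose proof (Nat.pow_gt_lin_r 2 (length s) ltac:(lia)). lia.
Qed.

End PrefixProduct.

Fixpoint prodR (f : nat -> R) (m : nat) : R :=
  match m with O => 1 | S m => prodR f m * f m end.

Lemma prodR_ext f g m : (forall k, (k < m)%nat -> f k = g k) -> prodR f m = prodR g m.
Proof. induction m; intros H; simpl; [| rewrite IHm, H]; auto. Qed.

Lemma prodR_INR f m : INR (prodn f m) = prodR (fun k => INR (f k)) m.
Proof. induction m; simpl; [| rewrite mult_INR, IHm]; reflexivity. Qed.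

Lemma prodR_div f g m : (forall k, g k <> 0) ->
  prodR f m / prodR g m = prodR (fun k => f k / g k) m.
Proof.
  intros Hg. assert (Hnz : prodR g m <> 0).
  { induction m; simpl; [lra | apply Rmult_integral_contrapositive; auto]. }
  induction m; simpl in *; [field |].
  rewrite <- IHm by (intro; apply Hnz; rewrite H; ring). field.
  split; [apply Hg | intro; apply Hnz; rewrite H; ring].
Qed.

Lemma prodR_nonneg f m : (forall k, 0 <= f k) -> 0 <= prodR f m.
Proof. intros H; induction m; simpl; [lra | apply Rmult_le_pos; auto]. Qed.

Lemma prodR_le f g m : (forall k, 0 <= f k <= g k) -> prodR f m <= prodR g m.
Proof.
  intros H; induction m; simpl; [lra |].
  apply Rmult_le_compat; [apply prodR_nonneg; intros; apply H | apply H | auto | apply H].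
Qed.

Lemma Un_cv_const (c : R) : Un_cv (fun _ => c) c.
Proof.
  intros eps Heps. exists 0%nat. intros. unfold Rdist. now rewrite Rminus_diag, Rabs_R0.
Qed.

Lemma prodR_cv (f : nat -> nat -> R) (l : nat -> R) m :
  (forall k, Un_cv (f k) (l k)) -> Un_cv (fun n => prodR (fun k => f k n) m) (prodR l m).
Proof. intros H; induction m; simpl; [apply Un_cv_const | apply CV_mult; auto]. Qed.

Lemma Rmax0_cv u l : Un_cv u l -> 0 <= l -> Un_cv (fun n => Rmax (u n) 0) l.
Proof.
  intros H Hl eps Heps. destruct (H eps Heps) as [N HN]. exists N. intros n Hn.
  specialize (HN n Hn). unfold Rdist in *. unfold Rmax. destruct (Rle_dec (u n) 0); auto.
  apply Rle_lt_trans with (2 := HN). rewrite !Rabs_left1 by lra. lra.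
Qed.

Lemma gen_prodR D s : gen D s = prodR (fun k => D (firstn k s) (nth k s false)) (length s).
Proof. unfold gen. induction (length s); simpl; [| rewrite IHn]; reflexivity. Qed.

Lemma gen_nonneg D s : (forall s x, 0 <= D s x) -> 0 <= gen D s.
Proof. intros H. rewrite gen_prodR. apply prodR_nonneg. intros; apply H. Qed.

Lemma gen_snoc D s x : gen D (s ++ [x]) = gen D s * D s x.
Proof.
  rewrite !gen_prodR, length_app, Nat.add_1_r. simpl prodR. f_equal.
  - apply prodR_ext. intros j Hj.
    rewrite firstn_app, app_nth1 by assumption.
    replace (j - length s)%nat with 0%nat by lia. now rewrite app_nil_r.
  - rewrite firstn_app, Nat.sub_diag, firstn_all, app_nil_r, app_nth2, Nat.sub_diag by lia.
    reflexivity.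
Qed.

(* Positive part of the product: by truncated subtraction the factor [nm * (1 - sg)] of the
   numerator is [nm] for the sign bit [sg = 0] and 0 otherwise. *)
Definition qpos_prefix_prod (c : qcode) : qcode :=
  (CZero,
   c_prefix_prod (CComp c_mul [snd (fst c); CComp c_sub [c_const 1; fst (fst c)]]),
   CComp c_pred [c_prefix_prod (CComp CSucc [snd c])]).

Lemma rat_pos_part sg nm dn :
  Rmax ((if Nat.eqb sg 0 then 1 else -1) * INR nm / INR (S dn)) 0 =
  INR (nm * (1 - sg)) / INR (S dn).
Proof.
  assert (Hd : 0 < INR (S dn)) by (apply lt_0_INR; lia).
  assert (Hq : 0 <= INR nm / INR (S dn))
    by (apply Rmult_le_pos; [apply pos_INR | left; apply Rinv_0_lt_compat, Hd]).
  destruct sg as [|sg]; cbn [Nat.eqb].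
  - rewrite Nat.mul_1_r, Rmult_1_l, Rmax_left; [reflexivity | exact Hq].
  - replace (1 - S sg)%nat with 0%nat by lia.
    rewrite Nat.mul_0_r, Rmax_right; [unfold Rdiv; symmetry; apply Rmult_0_l |].
    unfold Rdiv in *. rewrite Rmult_assoc. lra.
Qed.

Lemma qval_pos_prefix_prod c s n (v : nat -> R) :
  (forall k, (k < length s)%nat ->
     qval c [enc (firstn k s); bitn (nth k s false); n] (v k)) ->
  qval (qpos_prefix_prod c) [enc s; n] (prodR (fun k => Rmax (v k) 0) (length s)).
Proof.
  intros Hv.
  destruct (choice (fun k (t : nat * nat * nat) => (k < length s)%nat ->
      let args := [enc (firstn k s); bitn (nth k s false); n] in
      eval (fst (fst c)) args (fst (fst t)) /\ eval (snd (fst c)) args (snd (fst t)) /\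
      eval (snd c) args (snd t) /\
      v k = (if Nat.eqb (fst (fst t)) 0 then 1 else -1) * INR (snd (fst t)) / INR (S (snd t))))
    as [t Ht].
  { intros k. destruct (Nat.ltb_spec k (length s)) as [Hk | Hk].
    - destruct (Hv k Hk) as (sg & nm & dn & H); now exists (sg, nm, dn).
    - exists (0, 0, 0)%nat; lia. }
  set (num := fun k => (snd (fst (t k)) * (1 - fst (fst (t k))))%nat).
  set (den := fun k => S (snd (t k))).
  assert (Hden : (0 < prodn den (length s))%nat).
  { clear; induction (length s); simpl; [lia | unfold den at 2; nia]. }
  exists 0%nat, (prodn num (length s)), (Nat.pred (prodn den (length s))).
  split; [constructor | split; [| split]].
  - apply eval_prefix_prod. intros k Hk. destruct (Ht k Hk) as (Hsg & Hnm & _).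
    eapply eval_comp2; [exact Hnm | | apply eval_mul].
    eapply eval_comp2; [apply eval_const | exact Hsg | apply eval_sub].
  - eapply eval_comp1; [| apply eval_pred]. apply eval_prefix_prod.
    intros k Hk. destruct (Ht k Hk) as (_ & _ & Hdn & _).
    eapply eval_comp1; [exact Hdn | constructor].
  - rewrite Nat.succ_pred_pos, Rmult_1_l, !prodR_INR, prodR_div by
      (assumption || (intros; apply not_0_INR; unfold den; lia)).
    apply prodR_ext. intros k Hk. destruct (Ht k Hk) as (_ & _ & _ & ->).
    unfold num, den. apply rat_pos_part.
Qed.

(** * Computable and weakly ML tests are ML tests *)

Lemma F_C_ML T : F_C T -> F_ML T.
Proof.
  intros [HT [_ [c Hc]]]. split; [assumption |].
  exists (qfirst c), (fun s _ => T s).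
  split; [| split]; [intros; apply qval_first, Hc | intros; lra | intros; apply Un_cv_const].
Qed.

(* Approximate each multiplier by the positive part of its rational approximation; the
   products increase to [gen D s]. *)
Lemma F_wML_ML T : F_wML T -> F_ML T.
Proof.
  intros [HT (D & HD0 & (c & q & Hq & Hmono & Hcv) & HTD)]. split; [assumption |].
  exists (qpos_prefix_prod c),
    (fun s n => prodR (fun k => Rmax (q (firstn k s, nth k s false) n) 0) (length s)).
  split; [| split].
  - intros s n. apply qval_pos_prefix_prod. intros k _. apply (Hq (_, _)).
  - intros s n. apply prodR_le. intros k.
    split; [apply Rmax_r | apply Rle_max_compat_r, Hmono].
  - intros s. rewrite HTD, gen_prodR. apply prodR_cv. intros k.
    apply Rmax0_cv; [apply (Hcv (_, _)) | apply HD0].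
Qed.

(** * The selection argument *)

Lemma length_prefix w n : length (prefix w n) = n.
Proof. unfold prefix. now rewrite length_map, length_seq. Qed.

Lemma selcount_mono sel w n m : (n <= m)%nat -> selcount sel w n <= selcount sel w m.
Proof. induction 1; simpl; [lra | destruct (sel (prefix w m)); lra]. Qed.

Lemma selcount_diverges sel w :
  (forall N, exists k, (N <= k)%nat /\ sel (prefix w k) = true) ->
  forall M, exists N, forall n, (N <= n)%nat -> selcount sel w n > M.
Proof.
  intros Hinf.
  assert (Hm : forall m : nat, exists n, INR m <= selcount sel w n).
  { induction m as [|m [n Hn]]; [exists 0%nat; simpl; lra |].
    destruct (Hinf n) as [k [Hk Hsel]]. exists (S k).
    pose proof (selcount_mono sel w n k Hk).
    rewrite S_INR. simpl. rewrite Hsel. lra. }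
  intros M. destruct (INR_unbounded M) as [m Hm']. destruct (Hm m) as [n Hn].
  exists n. intros n' Hn'. pose proof (selcount_mono sel w n n' Hn'). lra.
Qed.

Lemma selsum_const sel (f : sit -> R) w v n :
  (forall k, sel (prefix w k) = true -> b2R (w k) - f (prefix w k) = v) ->
  selsum sel f w n = v * selcount sel w n.
Proof.
  intros H. induction n; simpl; [lra |]. rewrite IHn.
  destruct (sel (prefix w n)) eqn:E; [rewrite H by assumption |]; lra.
Qed.

(* The relative frequency of ones along such a selection is 0 or 1, which [a, b] excludes. *)
Lemma sel_random_constant_outcome Ss a b varpi sel x :
  0 < a -> b < 1 -> sel_random Ss (const_fsys a b) varpi -> Ss sel ->
  (forall k, sel (prefix varpi k) = true -> varpi k = x) ->
  exists N, forall k, (N <= k)%nat -> sel (prefix varpi k) = false.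
Proof.
  intros Ha Hb Hrand Hsel Hx. apply Classical_Prop.NNPP. intros Hfin.
  assert (Hinf : forall N, exists k, (N <= k)%nat /\ sel (prefix varpi k) = true).
  { intros N. apply Classical_Prop.NNPP. intros Hno. apply Hfin. exists N. intros k Hk.
    destruct (sel (prefix varpi k)) eqn:E; [exfalso; apply Hno; eauto | reflexivity]. }
  pose proof (selcount_diverges _ _ Hinf) as Hdiv.
  destruct (Hrand sel Hsel Hdiv) as [Hlow Hup]. destruct (Hdiv 0) as [N0 HN0].
  assert (Hratio : forall f v n, (forall k, sel (prefix varpi k) = true ->
      b2R (varpi k) - f (prefix varpi k) = v) -> (N0 <= n)%nat ->
      selsum sel f varpi n / selcount sel varpi n = v).
  { intros f v n Hv Hn. rewrite (selsum_const _ _ _ v) by assumption.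
    specialize (HN0 n Hn). field. lra. }
  destruct x.
  - destruct (Hup (1 - b) ltac:(lra)) as [N1 HN1].
    specialize (HN1 (max N0 N1) ltac:(lia)).
    rewrite (Hratio _ (1 - b)) in HN1; [lra | | lia].
    intros k Hk. rewrite (Hx k Hk). simpl. lra.
  - destruct (Hlow a Ha) as [N1 HN1].
    specialize (HN1 (max N0 N1) ltac:(lia)).
    rewrite (Hratio _ (- a)) in HN1; [lra | | lia].
    intros k Hk. rewrite (Hx k Hk). simpl. lra.
Qed.

Definition sel_SrF (r : R) (F : rproc) : selproc := fun s =>
  if excluded_middle_informative
       (exists s', length s' = length s /\ Er r (DeltaF F s') > 0)
  then true else false.

Lemma sel_SrF_is_SrF r F : is_SrF r F (sel_SrF r F).
Proof.
  intros s. unfold sel_SrF.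
  destruct excluded_middle_informative; split; auto; discriminate.
Qed.

(* [S^r_T] never selects a time at which [r] is the forecast, as there [E_r(ΔT) <= 0]. *)
Lemma sel_SrF_phi_pq varpi p q T r k :
  supermart (phi_pq varpi p q) T -> sel_SrF r T (prefix varpi k) = true ->
  r <> (if varpi k then q else p).
Proof.
  intros Hsm Hsel ->. apply sel_SrF_is_SrF in Hsel.
  destruct Hsel as [s [Hs Hpos]]. rewrite length_prefix in Hs.
  enough (Er (if varpi k then q else p) (DeltaF T s) <= 0) by lra.
  apply Hsm. unfold in_fs, phi_pq. rewrite Hs. destruct (varpi k); simpl; lra.
Qed.

Definition supermart_from (N : nat) (phi : fsys) (M : rproc) : Prop :=
  forall s r, (N <= length s)%nat -> in_fs phi s r -> Er r (DeltaF M s) <= 0.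

Lemma Er_between p q r f : p <= r <= q -> Er p f <= 0 -> Er q f <= 0 -> Er r f <= 0.
Proof.
  unfold Er. intros Hr Hp Hq.
  destruct (Rle_dec (f false) (f true));
    [apply Rle_trans with (2 := Hq) | apply Rle_trans with (2 := Hp)]; nra.
Qed.

Section EventualSupermartingale.

Variables (p q a b : R) (Ss : selproc -> Prop) (varpi : path).
Hypotheses (Ha : 0 < a) (Hb : b < 1) (HSs : contains_SpqML p q Ss)
  (Hrand : sel_random Ss (const_fsys a b) varpi).

Lemma eventually_Er_nonpos T r : F_ML T -> supermart (phi_pq varpi p q) T ->
  r = p \/ r = q -> exists N, forall s, (N <= length s)%nat -> Er r (DeltaF T s) <= 0.
Proof.
  intros HT Hsm Hr.
  assert (HS : Ss (sel_SrF r T)) by (apply (HSs T r); auto using sel_SrF_is_SrF).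
  assert (Hx : exists x, forall k, sel_SrF r T (prefix varpi k) = true -> varpi k = x).
  { destruct Hr as [-> | ->]; [exists true | exists false]; intros k Hk;
      pose proof (sel_SrF_phi_pq varpi p q T _ k Hsm Hk);
      destruct (varpi k); auto; contradiction. }
  destruct Hx as [x Hx].
  destruct (sel_random_constant_outcome Ss a b varpi _ x Ha Hb Hrand HS Hx) as [N HN].
  exists N. intros s Hs. apply Rnot_lt_le. intros Hpos.
  assert (Hsel : sel_SrF r T (prefix varpi (length s)) = true).
  { apply sel_SrF_is_SrF. exists s. rewrite length_prefix. auto. }
  rewrite HN in Hsel by assumption. discriminate.
Qed.

Lemma eventually_supermart_const T : F_ML T -> supermart (phi_pq varpi p q) T ->
  exists N, supermart_from N (const_fsys p q) T.
Proof.
  intros HT Hsm.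
  destruct (eventually_Er_nonpos T p HT Hsm (or_introl eq_refl)) as [Np Hp].
  destruct (eventually_Er_nonpos T q HT Hsm (or_intror eq_refl)) as [Nq Hq].
  exists (max Np Nq). intros s r Hs Hr.
  apply (Er_between p q); [exact Hr | apply Hp | apply Hq]; lia.
Qed.

End EventualSupermartingale.

(** * Restarting a test *)

Lemma INR_S_pos k : 0 < INR (S k).
Proof. apply lt_0_INR; lia. Qed.

Lemma short_sits_bounded (f : sit -> R) N :
  exists k : nat, forall s, (length s <= N)%nat -> f s <= INR (S k).
Proof.
  enough (exists B, forall s, (length s <= N)%nat -> f s <= B) as [B HB].
  { destruct (INR_unbounded B) as [k Hk]. exists k. intros s Hs.
    specialize (HB s Hs). rewrite S_INR. lra. }
  revert f; induction N as [|N IH]; intros f.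
  - exists (f nil). intros [|x s] Hs; [lra | simpl in Hs; lia].
  - destruct (IH (fun s => f (true :: s))) as [B1 H1].
    destruct (IH (fun s => f (false :: s))) as [B0 H0].
    exists (Rmax (f nil) (Rmax B1 B0)).
    intros [|[|] s] Hs; simpl in Hs; [apply Rmax_l | |];
      (eapply Rle_trans; [| eapply Rle_trans; [| apply Rmax_r]]);
      [apply H1 | apply Rmax_l | apply H0 | apply Rmax_r]; lia.
Qed.

Lemma Er_DeltaF_scaled r c T T' s :
  T' s = c * T s -> (forall x, T' (s ++ [x]) = c * T (s ++ [x])) ->
  Er r (DeltaF T' s) = c * Er r (DeltaF T s).
Proof. intros Hs Hsx. unfold Er, DeltaF. rewrite !Hsx, Hs. ring. Qed.

Lemma Er_DeltaF_nonincreasing r T s : 0 <= r <= 1 ->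
  (forall x, T (s ++ [x]) <= T s) -> Er r (DeltaF T s) <= 0.
Proof.
  intros Hr Hx. pose proof (Hx true). pose proof (Hx false). unfold Er, DeltaF. nra.
Qed.

Definition eventually_scaled (c : R) (T' T : rproc) : Prop :=
  exists N, forall s, (N <= length s)%nat -> T' s = c * T s.

Lemma limsup_inf_scaled c T' T w : 0 < c -> eventually_scaled c T' T ->
  limsup_inf (fun n => T (prefix w n)) -> limsup_inf (fun n => T' (prefix w n)).
Proof.
  intros Hc [N HN] Hinf M N0. destruct (Hinf (M / c) (max N0 N)) as [n [Hn HM]].
  exists n. split; [lia |]. rewrite HN by (rewrite length_prefix; lia).
  apply Rmult_gt_compat_l with (r := c) in HM; [| exact Hc].
  replace (c * (M / c)) with M in HM by (field; lra). exact HM.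
Qed.

Lemma limsup_ge0_scaled c T' T w tau : 0 < c -> eventually_scaled c T' T ->
  limsup_ge0 (fun n => T (prefix w n) - tau n) ->
  limsup_ge0 (fun n => T' (prefix w n) - c * tau n).
Proof.
  intros Hc [N HN] Hge eps N0 Heps.
  destruct (Hge (eps / c) (max N0 N)) as [n [Hn Hgt]];
    [apply Rdiv_lt_0_compat; assumption |].
  exists n. split; [lia |]. rewrite HN by (rewrite length_prefix; lia).
  apply Rmult_gt_compat_l with (r := c) in Hgt; [| exact Hc].
  replace (c * - (eps / c)) with (- eps) in Hgt by (field; lra). lra.
Qed.

Lemma growth_scale tau k : growth tau -> growth (fun n => / INR (S k) * tau n).
Proof.
  intros (H0 & (c & q & Hq & Happrox) & Hmono & Hunb).
  pose proof (INR_S_pos k) as Hk.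
  assert (Hk1 : / INR (S k) <= 1).
  { rewrite <- Rinv_1. apply Rinv_le_contravar; [lra |].
    rewrite S_INR. pose proof (pos_INR k). lra. }
  assert (Hinv : 0 < / INR (S k)) by (apply Rinv_0_lt_compat, Hk).
  split; [| split; [| split]].
  - intros n. apply Rmult_le_pos; [lra | apply H0].
  - exists (qscale k c), (fun n m => / INR (S k) * q n m). split.
    + intros n m. apply qval_scale, Hq.
    + intros n m. rewrite <- Rmult_minus_distr_l, Rabs_mult, Rabs_pos_eq by lra.
      specialize (Happrox n m). pose proof (Rabs_pos (tau n - q n m)). nra.
  - intros n. apply Rmult_le_compat_l; [lra | apply Hmono].
  - intros M. destruct (Hunb (M * INR (S k))) as [n Hn]. exists n.
    apply Rmult_lt_reg_l with (INR (S k)); [exact Hk |].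
    rewrite <- Rmult_assoc, Rinv_r, Rmult_1_l by lra. lra.
Qed.

Definition restart (T : rproc) (N k : nat) : rproc :=
  fun s => if (length s <=? N)%nat then 1 else / INR (S k) * T s.

Lemma restart_long T N k s : (N < length s)%nat -> restart T N k s = / INR (S k) * T s.
Proof. intros Hs. unfold restart. now rewrite (proj2 (Nat.leb_gt (length s) N)). Qed.

Lemma restart_test T N k : test_proc T -> test_proc (restart T N k).
Proof.
  intros [HT _]. split; [| reflexivity].
  intros s. unfold restart. destruct (length s <=? N)%nat; [lra |].
  apply Rmult_le_pos; [left; apply Rinv_0_lt_compat, INR_S_pos | apply HT].
Qed.

Lemma restart_supermart p q T N k : 0 <= p -> q <= 1 ->
  (forall s, length s = S N -> T s <= INR (S k)) ->
  supermart_from N (const_fsys p q) T -> supermart (const_fsys p q) (restart T N k).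
Proof.
  intros Hp Hq Hbound Hsm s r Hr. pose proof (INR_S_pos k) as Hk.
  unfold in_fs, const_fsys in Hr; simpl in Hr.
  destruct (Nat.ltb_spec N (length s)) as [Hlong | Hshort].
  - rewrite (Er_DeltaF_scaled r (/ INR (S k)) T);
      [| apply restart_long, Hlong
       | intros; apply restart_long; rewrite length_app; simpl; lia].
    pose proof (Hsm s r ltac:(lia) Hr). pose proof (Rinv_0_lt_compat _ Hk). nra.
  - apply Er_DeltaF_nonincreasing; [lra |]. intros x. unfold restart.
    rewrite length_app, (proj2 (Nat.leb_le (length s) N) Hshort). simpl length.
    destruct (Nat.leb_spec (length s + 1) N); [lra |].
    apply Rmult_le_reg_l with (INR (S k)); [exact Hk |].
    rewrite <- Rmult_assoc, Rinv_r, Rmult_1_l, Rmult_1_r by lra.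
    apply Hbound. rewrite length_app. simpl. lia.
Qed.

Lemma F_ML_restart T N k : F_ML T -> F_ML (restart T N k).
Proof.
  intros [HT (c & q & Hq & Hmono & Hcv)]. split; [now apply restart_test |].
  pose proof (INR_S_pos k) as Hk.
  exists (qif_shorter (S N) 2 qone (qscale k c)),
    (fun s n => if (length s <=? N)%nat then 1 else / INR (S k) * q s n).
  split; [| split].
  - intros s n. apply (qval_if_shorter (S N) _ _ s [n]);
      [apply qval_one | apply qval_scale, Hq].
  - intros s n. destruct (length s <=? N)%nat; [lra |].
    apply Rmult_le_compat_l; [left; apply Rinv_0_lt_compat, Hk | apply Hmono].
  - intros s. unfold restart. destruct (length s <=? N)%nat; [apply Un_cv_const |].
    apply CV_mult; [apply Un_cv_const | apply Hcv].
Qed.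

Lemma F_C_restart T N k : F_C T -> F_C (restart T N k).
Proof.
  intros [HT [Hpos [c Hc]]]. split; [now apply restart_test | split].
  - intros s. unfold restart. destruct (length s <=? N)%nat; [lra |].
    apply Rmult_lt_0_compat; [apply Rinv_0_lt_compat, INR_S_pos | apply Hpos].
  - exists (qif_shorter (S N) 1 qone (qscale k c)). intros s.
    apply (qval_if_shorter (S N) _ _ s []); [apply qval_one | apply qval_scale, Hc].
Qed.

(* A weakly ML test must remain generated by lower semicomputable multipliers, so it is
   restarted by damping its multipliers before time [N] instead. *)
Definition restart_mult (D : mproc) (N k : nat) : mproc :=
  fun s x => if (length s <? N)%nat then / INR (S k) * D s x else D s x.

Lemma gen_restart_mult D N k s :
  gen (restart_mult D N k) s = (/ INR (S k)) ^ (min (length s) N) * gen D s.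
Proof.
  induction s as [|x s IH] using rev_ind; [unfold gen; simpl; ring |].
  rewrite !gen_snoc, IH, length_app. simpl length. unfold restart_mult.
  destruct (Nat.ltb_spec (length s) N).
  - replace (min (length s + 1) N) with (S (min (length s) N)) by lia. simpl. ring.
  - replace (min (length s + 1) N) with (min (length s) N) by lia. ring.
Qed.

Lemma restart_mult_scaled D N k :
  eventually_scaled ((/ INR (S k)) ^ N) (gen (restart_mult D N k)) (gen D).
Proof.
  exists N. intros s Hs. rewrite gen_restart_mult. do 2 f_equal. lia.
Qed.

Lemma restart_mult_nonneg D N k : (forall s x, 0 <= D s x) ->
  forall s x, 0 <= restart_mult D N k s x.
Proof.
  intros HD s x. unfold restart_mult. destruct (length s <? N)%nat; [| apply HD].
  apply Rmult_le_pos; [left; apply Rinv_0_lt_compat, INR_S_pos | apply HD].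
Qed.

Lemma F_wML_restart_mult D N k : (forall s x, 0 <= D s x) ->
  lsc (fun (sx : sit * bool) n => enc (fst sx) :: (if snd sx then 1 else 0)%nat :: n :: nil)
    (fun sx => D (fst sx) (snd sx)) ->
  F_wML (gen (restart_mult D N k)).
Proof.
  intros HD (c & q & Hq & Hmono & Hcv). pose proof (INR_S_pos k) as Hk.
  split; [split; [intros s; apply gen_nonneg, restart_mult_nonneg, HD | reflexivity] |].
  exists (restart_mult D N k).
  split; [apply restart_mult_nonneg, HD | split; [| reflexivity]].
  exists (qif_shorter N 3 (qscale k c) c),
    (fun sx n => if (length (fst sx) <? N)%nat then / INR (S k) * q sx n else q sx n).
  split; [| split].
  - intros [s x] n. apply (qval_if_shorter N _ _ s [_; n]);
      [apply qval_scale |]; apply (Hq (s, x)).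
  - intros [s x] n. simpl fst. destruct (length s <? N)%nat; [| apply Hmono].
    apply Rmult_le_compat_l; [left; apply Rinv_0_lt_compat, Hk | apply Hmono].
  - intros [s x]. unfold restart_mult; simpl fst; simpl snd.
    destruct (length s <? N)%nat; [apply CV_mult; [apply Un_cv_const |] |]; apply (Hcv (s, x)).
Qed.

Lemma restart_mult_supermart p q D N k : 0 <= p -> q <= 1 -> (forall s x, 0 <= D s x) ->
  (forall s x, (length s < N)%nat -> D s x <= INR (S k)) ->
  supermart_from N (const_fsys p q) (gen D) ->
  supermart (const_fsys p q) (gen (restart_mult D N k)).
Proof.
  intros Hp Hq HD Hbound Hsm s r Hr. pose proof (INR_S_pos k) as Hk.
  unfold in_fs, const_fsys in Hr; simpl in Hr.
  destruct (Nat.ltb_spec (length s) N) as [Hshort | Hlong].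
  - apply Er_DeltaF_nonincreasing; [lra |]. intros x.
    rewrite gen_snoc. unfold restart_mult at 2. rewrite (proj2 (Nat.ltb_lt _ _) Hshort).
    rewrite <- (Rmult_1_r (gen _ s)) at 2.
    apply Rmult_le_compat_l; [apply gen_nonneg, restart_mult_nonneg, HD |].
    apply Rmult_le_reg_l with (INR (S k)); [exact Hk |].
    rewrite <- Rmult_assoc, Rinv_r, Rmult_1_l, Rmult_1_r by lra. apply Hbound, Hshort.
  - destruct (restart_mult_scaled D N k) as [M HM].
    rewrite (Er_DeltaF_scaled r ((/ INR (S k)) ^ N) (gen D));
      [| rewrite gen_restart_mult; do 2 f_equal; lia
       | intros; rewrite gen_restart_mult, length_app; simpl length; do 2 f_equal; lia].
    pose proof (Hsm s r Hlong Hr).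
    pose proof (pow_lt _ N (Rinv_0_lt_compat _ Hk)). nra.
Qed.

(** * Transfer of randomness *)

Lemma random_mono Rn phi phi' w :
  (forall s r, in_fs phi s r -> in_fs phi' s r) -> random Rn phi w -> random Rn phi' w.
Proof.
  intros Hsub.
  assert (Hts : forall T, test_supermart phi' T -> test_supermart phi T).
  { intros T [HT Hsm]. split; [exact HT |]. intros s r Hr. apply Hsm, Hsub, Hr. }
  destruct Rn; cbn [random]; unfold ML_like_random.
  1-3: intros Hrand (T & HT & HTs & Hinf); apply Hrand; exists T; auto.
  intros Hrand (T & tau & HT & HTs & Htau); apply Hrand; exists T, tau; auto.
Qed.

Lemma ML_like_random_transfer (cls : rproc -> Prop) phi phi' w :
  (forall T, cls T -> test_supermart phi T ->
     exists T' c, 0 < c /\ cls T' /\ test_supermart phi' T' /\ eventually_scaled c T' T) ->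
  ML_like_random cls phi' w -> ML_like_random cls phi w.
Proof.
  intros Hrestart Hrand (T & HT & HTs & Hinf). apply Hrand.
  destruct (Hrestart T HT HTs) as (T' & c & Hc & HT' & HTs' & Hsc).
  exists T'. split; [assumption | split; [assumption |]].
  exact (limsup_inf_scaled c T' T w Hc Hsc Hinf).
Qed.

Section Restart.

Variables (p q a b : R) (Ss : selproc -> Prop) (varpi : path).
Hypotheses (Hp : 0 <= p) (Hq : q <= 1) (Ha : 0 < a) (Hb : b < 1)
  (HSs : contains_SpqML p q Ss) (Hrand : sel_random Ss (const_fsys a b) varpi).

Lemma restart_scaled T N k : eventually_scaled (/ INR (S k)) (restart T N k) T.
Proof. exists (S N). intros s Hs. apply restart_long. lia. Qed.

Lemma restart_test_supermart T : F_ML T -> test_supermart (phi_pq varpi p q) T ->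
  exists N k, test_supermart (const_fsys p q) (restart T N k).
Proof.
  intros HT [Htest Hsm].
  destruct (eventually_supermart_const p q a b Ss varpi Ha Hb HSs Hrand T HT Hsm) as [N HN].
  destruct (short_sits_bounded T (S N)) as [k Hk].
  exists N, k. split; [now apply restart_test |].
  apply restart_supermart; auto. intros s Hs. apply Hk. lia.
Qed.

Lemma ML_restart T : F_ML T -> test_supermart (phi_pq varpi p q) T ->
  exists T' c, 0 < c /\ F_ML T' /\ test_supermart (const_fsys p q) T' /\
    eventually_scaled c T' T.
Proof.
  intros HT HTs. destruct (restart_test_supermart T HT HTs) as (N & k & HTs').
  exists (restart T N k), (/ INR (S k)).
  split; [apply Rinv_0_lt_compat, INR_S_pos |].
  split; [now apply F_ML_restart | split; [exact HTs' | apply restart_scaled]].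
Qed.

Lemma C_restart T : F_C T -> test_supermart (phi_pq varpi p q) T ->
  exists T' k, F_C T' /\ test_supermart (const_fsys p q) T' /\
    eventually_scaled (/ INR (S k)) T' T.
Proof.
  intros HT HTs. destruct (restart_test_supermart T (F_C_ML T HT) HTs) as (N & k & HTs').
  exists (restart T N k), k.
  split; [now apply F_C_restart | split; [exact HTs' | apply restart_scaled]].
Qed.

Lemma wML_restart T : F_wML T -> test_supermart (phi_pq varpi p q) T ->
  exists T' c, 0 < c /\ F_wML T' /\ test_supermart (const_fsys p q) T' /\
    eventually_scaled c T' T.
Proof.
  intros HT [_ Hsm].
  destruct (eventually_supermart_const p q a b Ss varpi Ha Hb HSs Hrand T (F_wML_ML T HT) Hsm)
    as [N HN].
  destruct HT as [_ (D & HD & Hlsc & HTD)].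
  pose proof (functional_extensionality _ _ HTD). subst T.
  destruct (short_sits_bounded (fun s => Rmax (D s true) (D s false)) N) as [k Hk].
  pose proof (F_wML_restart_mult D N k HD Hlsc) as Hclass.
  exists (gen (restart_mult D N k)), ((/ INR (S k)) ^ N).
  split; [apply pow_lt, Rinv_0_lt_compat, INR_S_pos |].
  split; [exact Hclass | split; [split; [apply Hclass |] | apply restart_mult_scaled]].
  apply restart_mult_supermart; auto.
  intros s x Hs. specialize (Hk s ltac:(lia)). cbv beta in Hk.
  destruct x; (eapply Rle_trans; [| exact Hk]); [apply Rmax_l | apply Rmax_r].
Qed.

End Restart.

Theorem corollary32 (p q a b : R) (Ss : selproc -> Prop) (varpi : path) :
  0 <= p -> p < q -> q <= 1 ->
  0 < a -> a <= b -> b < 1 ->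
  countable_set Ss ->
  contains_SpqML p q Ss ->
  sel_random Ss (const_fsys a b) varpi ->
  forall (Rn : rnotion) (w : path),
    random Rn (phi_pq varpi p q) w <-> random Rn (const_fsys p q) w.
Proof.
  intros Hp Hpq Hq Ha _ Hb _ HSs Hrand Rn w. split.
  - apply random_mono. intros s r.
    unfold in_fs, phi_pq, const_fsys. destruct (varpi (length s)); simpl; lra.
  - destruct Rn; cbn [random].
    + apply ML_like_random_transfer, (ML_restart p q a b Ss varpi); assumption.
    + apply ML_like_random_transfer, (wML_restart p q a b Ss varpi); assumption.
    + apply ML_like_random_transfer. intros T HT HTs.
      destruct (C_restart p q a b Ss varpi Hp Hq Ha Hb HSs Hrand T HT HTs)
        as (T' & k & HT' & HTs' & Hsc).
      exists T', (/ INR (S k)). split; [apply Rinv_0_lt_compat, INR_S_pos | auto].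
    + intros HS (T & tau & HT & HTs & Htau & Hge). apply HS.
      destruct (C_restart p q a b Ss varpi Hp Hq Ha Hb HSs Hrand T HT HTs)
        as (T' & k & HT' & HTs' & Hsc).
      exists T', (fun n => / INR (S k) * tau n).
      split; [| split; [| split]]; [assumption | assumption | now apply growth_scale |].
      exact (limsup_ge0_scaled _ T' T w tau (Rinv_0_lt_compat _ (INR_S_pos k)) Hsc Hge).
Qed.
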